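(* Let $E$ be an Archimedean vector lattice equipped with a completely metrizable locally solid (linear) topology. Then every disjoint system of positive vectors of $E$ is countable if and only if $E$ has a weak unit and the countable sup property.
   Context: A locally solid vector lattice is a vector lattice with a linear topology having a base of zero neighborhoods consisting of solid sets. A disjoint system of positive vectors is a set of vectors $x\ge 0$ that are pairwise disjoint. A vector $e\ge 0$ is a weak unit if $|x|\wedge e=0$ implies $x=0$. A vector lattice has the countable sup property if every nonempty subset possessing a supremum contains a countable subset with the same supremum. *)

From HB Require Import structures.
From mathcomp Require Import all_boot all_order all_algebra.
From mathcomp Require Import all_classical all_reals all_analysis.
Set Implicit Arguments. Unset Strict Implicit. Unset Printing Implicit Defensive.
Import Order.TTheory GRing.Theory Num.Theory.
Local Open Scope classical_set_scope.
Local Open Scope ring_scope.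

Record vector_lattice (R : realType) (E : lmodType R) := VectorLattice {
  vle : E -> E -> Prop;
  vle_refl : forall x, vle x x;
  vle_antisym : forall x y, vle x y -> vle y x -> x = y;
  vle_trans : forall x y z, vle x y -> vle y z -> vle x z;
  vle_add : forall x y z, vle x y -> vle (x + z) (y + z);
  vle_scale : forall (a : R) x y, 0 <= a -> vle x y -> vle (a *: x) (a *: y);
  vjoin : E -> E -> E;
  vjoin_ubl : forall x y, vle x (vjoin x y);
  vjoin_ubr : forall x y, vle y (vjoin x y);
  vjoin_least : forall x y z, vle x z -> vle y z -> vle (vjoin x y) z
}.

Section VL.
Variables (R : realType) (E : lmodType R) (L : vector_lattice E).

Definition vmeet (x y : E) : E := - vjoin L (- x) (- y).
Definition vabs (x : E) : E := vjoin L x (- x).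

Definition is_sup (A : set E) (s : E) : Prop :=
  (forall a, A a -> vle L a s) /\
  (forall u, (forall a, A a -> vle L a u) -> vle L s u).

Definition archimedean_vl : Prop :=
  forall x y : E, vle L 0 x -> (forall n : nat, vle L (x *+ n) y) -> x = 0.

Definition solid (V : set E) : Prop :=
  forall x y, V y -> vle L (vabs x) (vabs y) -> V x.

Definition disjoint_system (D : set E) : Prop :=
  (forall x, D x -> vle L 0 x) /\
  (forall x y, D x -> D y -> x <> y -> vmeet x y = 0).

Definition weak_unit (e : E) : Prop :=
  vle L 0 e /\ forall x, vmeet (vabs x) e = 0 -> x = 0.

Definition countable_sup_property : Prop :=
  forall A : set E, A !=set0 -> forall s, is_sup A s ->
    exists B : set E, B `<=` A /\ countable B /\ is_sup B s.
End VL.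

Definition locally_solid (R : realType) (E : topologicalLmodType R)
  (L : vector_lattice E) : Prop :=
  forall U : set E, nbhs (0 : E) U ->
    exists V : set E, nbhs (0 : E) V /\ solid L V /\ V `<=` U.

Definition completely_metrizable (R : realType) (T : topologicalType) : Prop :=
  exists d : T -> T -> R,
    (forall x y, 0 <= d x y) /\
    (forall x y, d x y = 0 <-> x = y) /\
    (forall x y, d x y = d y x) /\
    (forall x y z, d x z <= d x y + d y z) /\
    (forall (x : T) (A : set T),
        nbhs x A <-> exists2 e : R, 0 < e & [set y | d x y < e] `<=` A) /\
    (forall u : nat -> T,
        (forall e : R, 0 < e -> exists N : nat, forall m n : nat,
            (N <= m)%N -> (N <= n)%N -> d (u m) (u n) < e) ->
        exists l : T, u @ \oo --> l).

From Pilot Require Import Defs.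
From HB Require Import structures.
From mathcomp Require Import all_boot all_order all_algebra.
From mathcomp Require Import all_classical all_reals all_analysis.
From mathcomp Require Import lra.
Set Implicit Arguments. Unset Strict Implicit. Unset Printing Implicit Defensive.
Import Order.TTheory GRing.Theory Num.Theory.
Local Open Scope classical_set_scope.
Local Open Scope ring_scope.

(* Countable disjoint systems give a weak unit: enumerate a maximal disjoint
   system (d_n) and choose t_n > 0 so small that the partial sums of
   sum_n t_n d_n move by less than 2^-n; by completeness they converge, and
   since local solidity makes the positive cone closed, the limit dominates
   every t_n d_n, hence is a weak unit by maximality.

   They also give the countable sup property: if s = sup A and a0 \in A, cut
   [a0, s] into n+1 steps of length h = (s - a0)/(n+1).  For each level t a
   countable maximal disjoint system below the vectors (a - t)^+, a \in A,
   comes with countably many witnesses in A.  Any upper bound u of all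
   witnesses makes (a - t)^+ and (t - u)^+ disjoint at every level, and
   climbing the levels gives a - u <= h for each a \in A; the Archimedean
   property then yields a <= u.

   Conversely, let e be a weak unit and D a disjoint system.  The truncations
   e /\ n d (d \in D) and e /\ x (x disjoint from D) have supremum e, so a
   countable family of them already has supremum e.  Every nonzero d \in D
   meets a member of this family, since otherwise d /\ e = 0, and each
   member meets at most one element of D. *)

Lemma countableU T (A B : set T) : countable A -> countable B -> countable (A `|` B).
Proof.
move=> cA cB; rewrite -bigcup2E; apply: bigcup_countable => // -[|[|n]] _ //=.
Qed.

Lemma countable_enum T (x0 : T) (A : set T) : countable A ->
  exists g : nat -> T, A `<=` range g.
Proof.
move=> /countable_injP [f f_inj].
have /choice [g gf] : forall n, exists x : T, forall a, A a -> f a = n -> x = a.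
  move=> n; have [[a [Aa <-]]|noA] := pselect (exists a, A a /\ f a = n).
    by exists a => a' Aa' /esym; apply: f_inj; rewrite inE.
  by exists x0 => a Aa fan; exfalso; apply: noA; exists a.
by exists g => a Aa; exists (f a) => //; apply: gf.
Qed.

Lemma is_subset1_countable T (A : set T) : is_subset1 A -> countable A.
Proof.
move=> A1; have [->//|/set0P[a Aa]] := eqVneq A set0.
by apply: sub_countable (countable1 a); apply: subset_card_le => x /A1; apply.
Qed.

Section VectorLattice.
Variables (R : realType) (E : lmodType R) (L : vector_lattice E).
Local Notation "x <=: y" := (vle L x y) (at level 70).
Local Notation vjoin := (vjoin L).
Local Notation vmeet := (vmeet L).
Local Notation vabs := (vabs L).

Definition vpos (x : E) : E := vjoin x 0.

Lemma lev_refl x : x <=: x. Proof. exact: vle_refl. Qed.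

Local Hint Resolve lev_refl : core.

Lemma lev_trans y x z : x <=: y -> y <=: z -> x <=: z.
Proof. exact: vle_trans. Qed.

Lemma lev_anti x y : x <=: y -> y <=: x -> x = y. Proof. exact: vle_antisym. Qed.

Lemma levDr z x y : x <=: y -> x + z <=: y + z. Proof. exact: vle_add. Qed.

Lemma levDl z x y : x <=: y -> z + x <=: z + y.
Proof. by rewrite ![z + _]addrC; apply: levDr. Qed.

Lemma levD x y z w : x <=: y -> z <=: w -> x + z <=: y + w.
Proof. by move=> /(levDr z) xy /(levDl y); apply: lev_trans. Qed.

Lemma subv_ge0 x y : 0 <=: y - x <-> x <=: y.
Proof.
split=> [/(levDr x)|/(levDr (- x))]; first by rewrite add0r subrK.
by rewrite subrr.
Qed.

Lemma subv_le0 x y : x - y <=: 0 <-> x <=: y.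
Proof.
split=> [/(levDr y)|/(levDr (- y))]; first by rewrite add0r subrK.
by rewrite subrr.
Qed.

Lemma levN x y : x <=: y -> - y <=: - x.
Proof. by move=> /subv_ge0 xy; apply/subv_ge0; rewrite opprK addrC. Qed.

Lemma lev_wpDr x p : 0 <=: p -> x <=: x + p.
Proof. by move=> /(levDl x); rewrite addr0. Qed.

Lemma addv_ge0 p q : 0 <=: p -> 0 <=: q -> 0 <=: p + q.
Proof. by move=> p0 q0; have := levD p0 q0; rewrite addr0. Qed.

Lemma levZ c x y : 0 <= c -> x <=: y -> c *: x <=: c *: y.
Proof. exact: vle_scale. Qed.

Lemma scalev_ge0 c x : 0 <= c -> 0 <=: x -> 0 <=: c *: x.
Proof. by move=> c0 /(levZ c0); rewrite scaler0. Qed.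

Lemma levMn n x y : x <=: y -> x *+ n <=: y *+ n.
Proof.
move=> xy; elim: n => [|n IHn]; first by rewrite !mulr0n.
by rewrite !mulrS; apply: levD.
Qed.

Lemma mulvn_ge0 n x : 0 <=: x -> 0 <=: x *+ n.
Proof. by move=> /(levMn n); rewrite mul0rn. Qed.

Lemma lev_mulSn n x : 0 <=: x -> x *+ n <=: x *+ n.+1.
Proof. by move=> x0; rewrite mulrSr; apply: lev_wpDr. Qed.

Lemma lev_joinl x y : x <=: vjoin x y. Proof. exact: vjoin_ubl. Qed.

Lemma lev_joinr x y : y <=: vjoin x y. Proof. exact: vjoin_ubr. Qed.

Local Hint Resolve lev_joinl lev_joinr : core.

Lemma vjoin_lub x y z : x <=: z -> y <=: z -> vjoin x y <=: z.
Proof. exact: vjoin_least. Qed.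

Lemma vjoinC x y : vjoin x y = vjoin y x.
Proof. by apply: lev_anti; apply: vjoin_lub. Qed.

Lemma vjoin_r x y : x <=: y -> vjoin x y = y.
Proof. by move=> xy; apply: lev_anti; first apply: vjoin_lub. Qed.

Lemma vjoin_mono x x' y y' : x <=: x' -> y <=: y' -> vjoin x y <=: vjoin x' y'.
Proof.
move=> xx' yy'; apply: vjoin_lub.
  exact: lev_trans xx' (lev_joinl _ _).
exact: lev_trans yy' (lev_joinr _ _).
Qed.

Lemma vjoin_addr x y z : vjoin x y + z = vjoin (x + z) (y + z).
Proof.
apply: lev_anti; last by apply: vjoin_lub; apply: levDr.
set J := vjoin (x + z) (y + z).
have le_subr w : w + z <=: J -> w <=: J - z by move=> /(levDr (- z)); rewrite addrK.
have := levDr z (vjoin_lub (le_subr _ (lev_joinl _ _)) (le_subr _ (lev_joinr _ _))).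
by rewrite subrK.
Qed.

Lemma lev_meetl x y : vmeet x y <=: x.
Proof. by rewrite -{2}(opprK x); apply/levN/lev_joinl. Qed.

Lemma lev_meetr x y : vmeet x y <=: y.
Proof. by rewrite -{2}(opprK y); apply/levN/lev_joinr. Qed.

Local Hint Resolve lev_meetl lev_meetr : core.

Lemma vmeet_glb x y z : z <=: x -> z <=: y -> z <=: vmeet x y.
Proof. by move=> zx zy; rewrite -(opprK z); apply/levN/vjoin_lub; apply: levN. Qed.

Lemma vmeetC x y : vmeet x y = vmeet y x.
Proof. by rewrite /Defs.vmeet vjoinC. Qed.

Lemma vmeet_l x y : x <=: y -> vmeet x y = x.
Proof. by move=> xy; apply: lev_anti; last apply: vmeet_glb. Qed.

Lemma vmeet_mono x x' y y' : x <=: x' -> y <=: y' -> vmeet x y <=: vmeet x' y'.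
Proof.
move=> xx' yy'; apply: vmeet_glb.
  exact: lev_trans (lev_meetl _ _) xx'.
exact: lev_trans (lev_meetr _ _) yy'.
Qed.

Lemma vmeet_addr x y z : vmeet x y + z = vmeet (x + z) (y + z).
Proof. by rewrite /Defs.vmeet -{1}[z]opprK -opprD vjoin_addr !opprD. Qed.

Lemma vmeet_ge0 x y : 0 <=: x -> 0 <=: y -> 0 <=: vmeet x y.
Proof. exact: vmeet_glb. Qed.

Lemma vjoin_add_vmeet x y : vjoin x y + vmeet x y = x + y.
Proof.
rewrite /Defs.vmeet; have -> : vjoin (- x) (- y) = vjoin x y - (x + y).
  by rewrite vjoin_addr !opprD !addrA subrr add0r addrAC subrr add0r vjoinC.
by rewrite opprB addrC subrK.
Qed.

Lemma vjoin_scale c x y : 0 < c -> c *: vjoin x y = vjoin (c *: x) (c *: y).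
Proof.
move=> c_gt0; have c0 := ltW c_gt0; have cinv0 : 0 <= c^-1 by rewrite invr_ge0.
have c_neq0 := lt0r_neq0 c_gt0.
have scaleK (z : E) : c *: (c^-1 *: z) = z by rewrite scalerA mulfV ?scale1r.
apply: lev_anti; last by apply: vjoin_lub; apply: levZ.
rewrite -[X in _ <=: X]scaleK; apply: levZ => //.
by apply: vjoin_lub; rewrite -[X in X <=: _](scalerK c_neq0); apply: levZ.
Qed.

Lemma vmeet_scale c x y : 0 < c -> c *: vmeet x y = vmeet (c *: x) (c *: y).
Proof. by move=> c0; rewrite /Defs.vmeet scalerN vjoin_scale // !scalerN. Qed.

Lemma vpos_ge0 x : 0 <=: vpos x. Proof. exact: lev_joinr. Qed.

Lemma lev_vpos x : x <=: vpos x. Proof. exact: lev_joinl. Qed.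

Local Hint Resolve vpos_ge0 lev_vpos : core.

Lemma vpos_lub x z : x <=: z -> 0 <=: z -> vpos x <=: z.
Proof. exact: vjoin_lub. Qed.

Lemma vpos_mono x y : x <=: y -> vpos x <=: vpos y.
Proof. by move=> xy; apply: vjoin_mono. Qed.

Lemma vpos_id x : 0 <=: x -> vpos x = x.
Proof. by move=> x0; rewrite /vpos vjoinC vjoin_r. Qed.

Lemma vpos_eq0 x : x <=: 0 -> vpos x = 0.
Proof. exact: vjoin_r. Qed.

Lemma vpos_sub_eq0 x y : vpos (x - y) = 0 -> x <=: y.
Proof. by move=> xy0; apply/subv_le0; rewrite -xy0. Qed.

Lemma vposN x : vpos (- x) = vpos x - x.
Proof. by rewrite /vpos vjoin_addr subrr add0r vjoinC. Qed.

Lemma vmeet_vposN x : vmeet (vpos x) (vpos (- x)) = 0.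
Proof.
rewrite vposN -[X in vmeet X _]add0r [vpos x - x]addrC -vmeet_addr.
by rewrite /Defs.vmeet oppr0 opprK vjoinC addNr.
Qed.

Lemma vposD x y : vpos (x + y) <=: vpos x + vpos y.
Proof. by apply: vpos_lub; [apply: levD|apply: addv_ge0]. Qed.

Lemma subv_vmeet x y : x - vmeet x y = vpos (x - y).
Proof. by rewrite /Defs.vmeet opprK addrC vjoin_addr addNr vjoinC addrC. Qed.

Lemma vmeet_eq0_addE p q : vmeet p q = 0 -> p + q = vjoin p q.
Proof. by move=> pq0; rewrite -vjoin_add_vmeet pq0 addr0. Qed.

Lemma vmeetDl_le p q r : 0 <=: p -> 0 <=: q -> 0 <=: r ->
  vmeet (p + q) r <=: vmeet p r + vmeet q r.
Proof.
move=> p0 q0 r0; rewrite [vmeet p r + _]addrC vmeet_addr.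
apply: vmeet_glb.
  rewrite [q + _]addrC vmeet_addr; apply: vmeet_glb => //.
  by apply: lev_trans (lev_meetr _ _) _; apply: lev_wpDr.
rewrite [r + vmeet p r]addrC vmeet_addr; apply: vmeet_glb.
  by apply: lev_trans (lev_meetr _ _) _; rewrite addrC; apply: lev_wpDr.
by apply: lev_trans (lev_meetr _ _) _; apply: lev_wpDr.
Qed.

Lemma vmeet_eq0_lev p q r : 0 <=: p -> 0 <=: r -> r <=: q ->
  vmeet p q = 0 -> vmeet p r = 0.
Proof.
move=> p0 r0 rq pq0; apply: lev_anti; last exact: vmeet_ge0.
by rewrite -pq0; apply: vmeet_mono.
Qed.

Lemma vmeet_eq0_mulrn n p q : 0 <=: p -> 0 <=: q ->
  vmeet p q = 0 -> vmeet p (q *+ n) = 0.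
Proof.
move=> p0 q0 pq0; elim: n => [|n IHn]; first by rewrite mulr0n vmeetC vmeet_l.
apply: lev_anti; last by apply: vmeet_ge0 => //; apply: mulvn_ge0.
rewrite mulrS vmeetC; apply: lev_trans (vmeetDl_le _ _ _) _ => //.
  exact: mulvn_ge0.
by rewrite vmeetC pq0 vmeetC IHn addr0.
Qed.

Lemma vmeet_eq0_scale c p q : 0 < c -> 0 <=: p -> 0 <=: q ->
  vmeet p q = 0 -> vmeet p (c *: q) = 0.
Proof.
move=> c_gt0 p0 q0 pq0; have cq0 : 0 <=: c *: q by apply: scalev_ge0 => //; apply: ltW.
have [c_le1|c_gt1] := lerP c 1.
  apply: vmeet_eq0_lev pq0 => //; apply/subv_ge0.
  by rewrite -{1}(scale1r q) -scalerBl; apply: scalev_ge0; rewrite ?subr_ge0.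
apply: lev_anti; last exact: vmeet_ge0.
have -> : 0 = c *: vmeet p q by rewrite pq0 scaler0.
rewrite vmeet_scale //; apply: vmeet_mono => //; apply/subv_ge0.
by rewrite -{2}(scale1r p) -scalerBl; apply: scalev_ge0; rewrite ?subr_ge0 ?ltW.
Qed.

Lemma lev_abs x : x <=: vabs x. Proof. exact: lev_joinl. Qed.

Lemma lev_absN x : - x <=: vabs x. Proof. exact: lev_joinr. Qed.

Lemma vabs_ge0 x : 0 <=: vabs x.
Proof.
have := levD (lev_abs x) (lev_absN x); rewrite subrr -mulr2n -scaler_nat.
have half0 : (0 : R) <= 2^-1 by rewrite invr_ge0.
by move=> /(levZ half0); rewrite scaler0 scalerA mulVf ?scale1r ?pnatr_eq0.
Qed.

Lemma vabs_id x : 0 <=: x -> vabs x = x.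
Proof.
move=> x0; rewrite /Defs.vabs vjoinC vjoin_r //.
by apply: (@lev_trans 0) => //; rewrite -oppr0; apply: levN.
Qed.

Lemma vabs_eq0 x : vabs x = 0 -> x = 0.
Proof.
move=> x0; apply: lev_anti; first by rewrite -x0; apply: lev_abs.
by have := lev_absN x; rewrite x0 => /levN; rewrite opprK oppr0.
Qed.

Lemma is_sup_disjoint B s d : is_sup L B s -> (forall b, B b -> 0 <=: b) ->
  0 <=: s -> 0 <=: d -> (forall b, B b -> vmeet d b = 0) -> vmeet d s = 0.
Proof.
move=> [Bs s_least] B0 s0 d0 dB; set m := vmeet d s.
have m0 : 0 <=: m by apply: vmeet_ge0.
have le_sub_m b : B b -> b <=: s - m.
  move=> Bb; have bm0 : vmeet b m = 0.
    by apply: vmeet_eq0_lev (B0 _ Bb) m0 (lev_meetl _ _) _; rewrite vmeetC dB.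
  apply/subv_ge0; rewrite -addrA -opprD [m + b]addrC; apply/subv_ge0.
  by rewrite vmeet_eq0_addE //; apply: vjoin_lub; [apply: Bs|apply: lev_meetr].
have := s_least _ le_sub_m => /(levDr (m - s)).
by rewrite addrCA subrr addr0 addrA subrK subrr => m_le0; apply: lev_anti.
Qed.

Definition maximal_disjoint_in (P D : set E) : Prop :=
  [/\ disjoint_system L D, D `<=` P &
      forall w, P w -> 0 <=: w -> (forall d, D d -> vmeet w d = 0) -> w = 0].

Lemma exists_maximal_disjoint (P : set E) : exists D, maximal_disjoint_in P D.
Proof.
pose Q := [set D : set E | disjoint_system L D /\ D `<=` P].
have [|D [[[Dpos Ddisj] DP] Dmax]] := @Zorn_bigcup E Q.
  move=> F FQ Ftot; split; last by move=> x [X /FQ [_ XP] /XP].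
  split; first by move=> x [X /FQ [[XP _] _] /XP].
  move=> x y [X FX Xx] [Y FY Yy] xy.
  have [XY|YX] := Ftot X Y FX FY.
    by have [[_ Ydisj] _] := FQ Y FY; apply: Ydisj => //; apply: XY.
  by have [[_ Xdisj] _] := FQ X FX; apply: Xdisj => //; apply: YX.
exists D; split => // w Pw w0 wD.
have [Dw|nDw] := pselect (D w); first by rewrite -(vmeet_l (lev_refl w)); apply: wD.
exfalso; apply: (Dmax (D `|` [set w])).
  by split=> [x Dx|/(_ w (or_intror erefl))]; [left|].
split; last by move=> x [/DP|->].
split; first by move=> x [/Dpos|->].
move=> x y [Dx|->] [Dy|->] xy //; first exact: Ddisj.
- by rewrite vmeetC wD.
- exact: wD.
Qed.

(* With [w] the left-hand meet, (n+1) w <= e + (nx - e)^+ and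
   (n+1) w <= (n+1) (e - nx)^+; the second summand drops out of the meet of the
   two bounds because (nx - e)^+ is disjoint from (e - nx)^+. *)
Lemma vmeet_vpos_subMn_le n e x : 0 <=: e -> 0 <=: x ->
  vmeet (vpos (e - x *+ n)) x *+ n.+1 <=: e.
Proof.
move=> e0 x0; set y := vpos (e - x *+ n); set w := vmeet y x.
have le_sum : w *+ n.+1 <=: e + vpos (x *+ n - e).
  rewrite mulrS; have -> : e + vpos (x *+ n - e) = y + x *+ n.
    by rewrite addrC /y /vpos !vjoin_addr !add0r !subrK vjoinC.
  by apply: levD; [apply: lev_meetl|apply: levMn; apply: lev_meetr].
have le_y : w *+ n.+1 <=: y *+ n.+1 by apply: levMn; apply: lev_meetl.
apply: lev_trans (vmeet_glb le_sum le_y) _.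
apply: lev_trans (vmeetDl_le _ _ _) _ => //; first exact/mulvn_ge0/vpos_ge0.
have -> : vmeet (vpos (x *+ n - e)) (y *+ n.+1) = 0.
  by rewrite /y; apply: vmeet_eq0_mulrn => //; rewrite -[e - x *+ n]opprB vmeet_vposN.
by rewrite addr0; apply: lev_meetl.
Qed.

(* [D] and its disjoint complement together generate [E] as a band, so in an
   Archimedean lattice these truncations have supremum [e]. *)
Definition truncations (D : set E) (e : E) : set E :=
  [set b | (exists2 d, D d & exists n, b = vmeet e (d *+ n)) \/
           (exists2 x, 0 <=: x /\ (forall d, D d -> vmeet x d = 0) & b = vmeet e x)].

Lemma truncations0 D e : disjoint_system L D -> 0 <=: e -> truncations D e 0.
Proof.
move=> [Dpos _] e0; right; exists 0; last by rewrite vmeetC vmeet_l.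
by split=> // d /Dpos d0; rewrite vmeet_l.
Qed.

Lemma truncations_ge0 D e b : disjoint_system L D -> 0 <=: e ->
  truncations D e b -> 0 <=: b.
Proof.
move=> [Dpos _] e0 [[d /Dpos d0 [n ->]]|[x [x0 _] ->]]; apply: vmeet_ge0 => //.
exact: mulvn_ge0.
Qed.

Lemma truncations_le D e b : truncations D e b -> b <=: e.
Proof. by case=> [[d _ [n ->]]|[x _ ->]]. Qed.

Lemma is_subset1_truncation_meets D e b : disjoint_system L D -> 0 <=: e ->
  truncations D e b -> is_subset1 [set d | D d /\ vmeet d b <> 0].
Proof.
move=> Dsys e0 Tb; have [Dpos Ddisj] := Dsys.
have b0 := truncations_ge0 Dsys e0 Tb.
case: Tb => [[d0 Dd0 [n bE]]|[x [x0 xD] bE]]; last first.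
  move=> d _ [Dd []]; apply: (vmeet_eq0_lev (q := x)) (Dpos _ Dd) b0 _ _.
    by rewrite bE.
  by rewrite vmeetC xD.
suff only_d0 d : D d -> vmeet d b <> 0 -> d = d0.
  by move=> d d' [Dd /(only_d0 _ Dd) ->] [Dd' /(only_d0 _ Dd') ->].
move=> Dd; apply: contra_notP => dd0.
apply: (vmeet_eq0_lev (q := d0 *+ n)) (Dpos _ Dd) b0 _ _; first by rewrite bE.
exact: vmeet_eq0_mulrn (Dpos _ Dd) (Dpos _ Dd0) (Ddisj _ _ Dd Dd0 dd0).
Qed.

(* Invariant: [(a - u - h)^+] is disjoint from every rung [(t0 + k h - u)^+]. *)
Lemma ladder_lev a u t0 h N : 0 <=: h -> t0 <=: u -> a <=: t0 + h *+ N ->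
  (forall k, vmeet (vpos (a - (t0 + h *+ k))) (vpos (t0 + h *+ k - u)) = 0) ->
  a - u <=: h.
Proof.
move=> h0 t0u aN rungs; apply: vpos_sub_eq0; set z := vpos (a - u - h).
have z0 : 0 <=: z := vpos_ge0 _.
have z_rung k : vmeet z (vpos (t0 + h *+ k - u)) = 0.
  elim: k => [|k IHk].
    rewrite mulr0n addr0 vpos_eq0; last exact/subv_le0.
    by rewrite vmeetC vmeet_l.
  apply: lev_anti; last by apply: vmeet_ge0.
  rewrite -IHk; apply: vmeet_glb => //.
  have : z <=: vpos (a - (t0 + h *+ k.+1)) + vpos (t0 + h *+ k - u).
    rewrite /z mulrSr addrA; move: (t0 + h *+ k) => t.
    rewrite -[a - u - h](_ : (a - (t + h)) + (t - u) = _); first exact: vposD.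
    by rewrite [t + h]addrC opprD !addrA subrK addrAC.
  move=> z_le; apply: lev_trans (vmeet_mono z_le (lev_refl _)) _.
  apply: lev_trans (vmeetDl_le _ _ _) _ => //.
  by rewrite rungs add0r.
have zN : z <=: vpos (t0 + h *+ N - u).
  apply/vpos_mono/(@lev_trans (a - u)); last exact: levDr.
  by rewrite -{2}(subr0 (a - u)); apply/levDl/levN.
apply: lev_anti => //.
by rewrite -(z_rung N) -{1}(vmeet_l (lev_refl z)); apply: vmeet_mono.
Qed.

Lemma threshold_witnesses (ccc : forall D, disjoint_system L D -> countable D)
    A a0 t : A a0 ->
  exists B, [/\ countable B, B `<=` A &
    forall u, (forall b, B b -> b <=: u) ->
    forall a, A a -> vmeet (vpos (a - t)) (vpos (t - u)) = 0].
Proof.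
move=> Aa0.
pose P := [set w | 0 <=: w /\ exists2 a, A a & w <=: vpos (a - t)].
have [D [Dsys DP Dmax]] := exists_maximal_disjoint P; have [Dpos _] := Dsys.
have /choice [wit witP] : forall w, exists a, D w -> A a /\ w <=: vpos (a - t).
  move=> w.
  have [/DP [_ [a Aa wa]]|nDw] := pselect (D w); first by exists a.
  by exists a0.
exists (wit @` D); split.
- exact: sub_countable (card_image_le _ _) (ccc _ Dsys).
- by move=> _ [w Dw <-]; have [] := witP w Dw.
move=> u ub a Aa; apply: Dmax.
- by split; [apply: vmeet_ge0|exists a].
- exact: vmeet_ge0.
move=> d Dd; apply: lev_anti; last by apply: vmeet_ge0; [apply: vmeet_ge0|apply: Dpos].
rewrite -(vmeet_vposN (t - u)) opprB; apply: vmeet_mono => //.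
apply: lev_trans (witP d Dd).2 _; apply/vpos_mono/levDr/ub.
by exists d.
Qed.

Section Archimedean.
Hypothesis arch : archimedean_vl L.

Lemma archimedean_eq0 x y : 0 <=: x -> (forall n, x <=: n.+1%:R^-1 *: y) -> x = 0.
Proof.
move=> x0 xy; apply: (arch (y := y) x0) => n.
apply: lev_trans (lev_mulSn n x0) _; have := levMn n.+1 (xy n).
by rewrite -[(_ *: y) *+ _]scaler_nat scalerA mulfV ?scale1r ?pnatr_eq0.
Qed.

Lemma archimedean_vmeet_eq0 e x u : 0 <=: e -> 0 <=: x ->
  (forall n, vmeet e (x *+ n) <=: u) -> vmeet (vpos (e - u)) x = 0.
Proof.
move=> e0 x0 le_u; set w := vmeet (vpos (e - u)) x.
have w0 : 0 <=: w by apply: vmeet_ge0.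
apply: (arch (y := e) w0) => n; apply: lev_trans (lev_mulSn n w0) _.
apply: lev_trans (vmeet_vpos_subMn_le n e0 x0); apply: levMn; apply: vmeet_mono => //.
rewrite -[vpos (e - _ *+ _)]subv_vmeet; apply: vpos_lub; first exact/levDl/levN/le_u.
exact/subv_ge0/lev_meetl.
Qed.

Lemma is_sup_truncations D e : disjoint_system L D -> 0 <=: e ->
  is_sup L (truncations D e) e.
Proof.
move=> Dsys e0; have [Dpos _] := Dsys.
split=> [b|u ub]; first exact: truncations_le.
have perpD d : D d -> vmeet (vpos (e - u)) d = 0.
  move=> Dd; apply: archimedean_vmeet_eq0 (Dpos _ Dd) _ => // n.
  by apply: ub; left; exists d => //; exists n.
have : vmeet (vpos (e - u)) (vpos (e - u)) = 0.
  apply: archimedean_vmeet_eq0 => // n; apply: ub; right.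
  exists (vpos (e - u) *+ n) => //; split; first exact/mulvn_ge0/vpos_ge0.
  move=> d Dd; rewrite vmeetC.
  by apply: vmeet_eq0_mulrn; [apply: Dpos|apply: vpos_ge0|rewrite vmeetC perpD].
by rewrite vmeet_l // => /vpos_sub_eq0.
Qed.

Lemma countable_disjoint_of_weak_unit e D : weak_unit L e ->
  countable_sup_property L -> disjoint_system L D -> countable D.
Proof.
move=> [e0 e_unit] csp Dsys; have [Dpos _] := Dsys.
have [B [BT [Bcount Bsup]]] :=
  csp _ (ex_intro _ 0 (truncations0 Dsys e0)) e (is_sup_truncations Dsys e0).
have B0 b : B b -> 0 <=: b by move=> /BT; apply: truncations_ge0.
have meets_B : D `<=` [set 0] `|` \bigcup_(b in B) [set d | D d /\ vmeet d b <> 0].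
  move=> d Dd; have [[b Bb dbN0]|noB] := pselect (exists2 b, B b & vmeet d b <> 0).
    by right; exists b.
  left; apply: e_unit; rewrite vabs_id; last exact: Dpos.
  apply: is_sup_disjoint Bsup B0 e0 (Dpos _ Dd) _ => b Bb.
  by apply: contra_notP noB => dbN0; exists b.
apply: sub_countable (subset_card_le meets_B) _.
apply: countableU; first exact: countable1.
apply: bigcup_countable => // b /BT Tb.
exact/is_subset1_countable/(is_subset1_truncation_meets Dsys e0 Tb).
Qed.

Lemma countable_sup_of_countable_disjoint
    (ccc : forall D, disjoint_system L D -> countable D) :
  countable_sup_property L.
Proof.
move=> A [a0 Aa0] s [Aub s_least].
pose h n : E := n.+1%:R^-1 *: (s - a0).
have h0 n : 0 <=: h n by apply: scalev_ge0; [rewrite invr_ge0|apply/subv_ge0/Aub].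
have top n : a0 + h n *+ n.+1 = s.
  by rewrite -scaler_nat scalerA mulfV ?scale1r ?pnatr_eq0 // addrC subrK.
have /choice [W Wspec] := fun kn : nat * nat =>
  threshold_witnesses ccc (a0 + h kn.2 *+ kn.1) Aa0.
pose B := [set a0] `|` \bigcup_(kn in [set: nat * nat]) W kn.
have BA : B `<=` A.
  by move=> b [->|[kn _ Wb]] //; have [_ WA _] := Wspec kn; apply: WA.
exists B; split=> //; split.
  apply: countableU; first exact: countable1.
  by apply: bigcup_countable => // kn _; have [] := Wspec kn.
split=> [b /BA /Aub //|u ub]; apply: s_least => a Aa.
apply: vpos_sub_eq0; apply: (archimedean_eq0 (y := s - a0)) => // n.
rewrite -/(h n); apply: vpos_lub (h0 n); apply: (@ladder_lev _ _ _ _ n.+1).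
- exact: h0.
- by apply: ub; left.
- by rewrite top; exact: Aub Aa.
move=> k; have [_ _ rung] := Wspec (k, n); apply: rung Aa => b Wb.
by apply: ub; right; exists (k, n).
Qed.
End Archimedean.
End VectorLattice.

Section GeometricCauchy.
Variables (R : realType) (T : Type) (d : T -> T -> R).
Hypotheses (d_refl : forall x, d x x = 0) (d_sym : forall x y, d x y = d y x)
  (d_triangle : forall x y z, d x z <= d x y + d y z).
Variable S : nat -> T.
Hypothesis S_step : forall k, d (S k) (S k.+1) < 2^-1 ^+ k.

Lemma geometric_dist_le m j :
  d (S m) (S (m + j)%N) <= 2 * 2^-1 ^+ m - 2 * 2^-1 ^+ (m + j).
Proof.
elim: j => [|j IHj]; first by rewrite addn0 d_refl subrr.
apply: le_trans (d_triangle _ (S (m + j)%N) _) _.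
rewrite addnS exprS mulrA mulfV ?mul1r ?pnatr_eq0 //.
by have := S_step (m + j)%N; lra.
Qed.

Lemma geometric_cauchy eps : 0 < eps ->
  exists N, forall m n, (N <= m)%N -> (N <= n)%N -> d (S m) (S n) < eps.
Proof.
move=> eps_gt0; have half_ge0 : (0 : R) <= 2^-1 by rewrite invr_ge0.
have half_lt1 : `|(2^-1 : R)| < 1 by rewrite ger0_norm // invf_lt1 // ltr1n.
have [N _ smallN] := cvgr0_norm_lt _ (cvg_expr half_lt1) (eps / 2)
  (divr_gt0 eps_gt0 (ltr0n R 2)).
have tailN : 2 * 2^-1 ^+ N < eps.
  by rewrite mulrC -ltr_pdivlMr //; move: (smallN N (leqnn N)); rewrite /= ger0_norm
    ?exprn_ge0.
have le_N m n : (N <= m)%N -> (m <= n)%N -> d (S m) (S n) < eps.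
  move=> Nm mn; rewrite -(subnKC mn).
  apply: le_lt_trans (geometric_dist_le m (n - m)) _.
  have : 2^-1 ^+ m <= 2^-1 ^+ N :> R.
    by apply: ler_wiXn2l Nm => //; rewrite invf_le1 // ler1n.
  have := exprn_ge0 (m + (n - m))%N half_ge0; lra.
exists N => m n Nm Nn; have [mn|/ltnW nm] := leqP m n; first exact: le_N.
by rewrite d_sym; apply: le_N.
Qed.
End GeometricCauchy.

Section LocallySolid.
Variables (R : realType) (E : topologicalLmodType R) (L : vector_lattice E).
Hypotheses (ls : locally_solid L) (cm : completely_metrizable R E).
Local Notation "x <=: y" := (vle L x y) (at level 70).
Local Notation vpos := (vpos L).

Lemma nbhs_add_scaler (x v : E) (A : set E) : nbhs x A ->
  exists2 t : R, 0 < t & A (x + t *: v).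
Proof.
move=> xA.
have : (fun t : R^o => x + t *: v) @ nbhs (0 : R^o) --> x.
  rewrite -[X in _ --> X]addr0 -[X in _ --> x + X](scale0r v).
  apply: (cvg_comp2 (h := fun a b : E => a + b) (cvg_cst x) _
    (@add_continuous E (x, 0 *: v))).
  exact: (cvg_comp2 (h := fun (a : R^o) (b : E) => a *: b) cvg_id (cvg_cst v)
    (@scale_continuous R E (0, v))).
move=> /(_ _ xA) /nbhs_ballP [r /= r_gt0 ballA].
exists (r / 2); first by rewrite divr_gt0.
apply: ballA; rewrite /ball /= sub0r normrN gtr0_norm ?divr_gt0 //.
by rewrite ltr_pdivrMr // ltr_pMr // ltr1n.
Qed.

(* The positive cone is closed: a solid neighbourhood of 0 that misses
   [(c - y)^+] cannot contain [u m - y] either, since [(c - y)^+ <= |u m - y|]. *)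
Lemma lev_lim (u : nat -> E) c y : u @ \oo --> y ->
  (\forall m \near \oo, c <=: u m) -> c <=: y.
Proof.
move=> uy cu; have [d [d_ge0 [d_eq0 [_ [_ [d_nbhs _]]]]]] := cm.
apply: vpos_sub_eq0; set w := vpos (c - y).
have [//|w_neq0] := eqVneq w 0; exfalso.
have dw_gt0 : 0 < d 0 w.
  by rewrite lt0r d_ge0 andbT; apply: contra_neq w_neq0 => /d_eq0 ->.
have U0 : nbhs (0 : E) [set z | d 0 z < d 0 w] by apply/d_nbhs; exists (d 0 w).
have [V [V0 [V_solid VU]]] := ls U0.
have uyV : \forall m \near \oo, V (u m - y).
  have uy0 : (fun m => u m - y) @ \oo --> (0 : E).
    rewrite -(subrr y); exact: (cvg_comp2 (h := fun a b : E => a - b) uy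
      (cvg_cst y) (@sub_continuous E (y, y))).
  exact: uy0 V0.
have [m [c_um Vm]] := filter_ex (filterI cu uyV).
have : V w.
  apply: V_solid Vm _; rewrite vabs_id; last exact: vpos_ge0.
  apply: vpos_lub; last exact: vabs_ge0.
  exact: lev_trans (levDr _ c_um) (lev_abs _ _).
by move=> /VU; rewrite /= ltxx.
Qed.

Lemma exists_dominating_series (f : nat -> E) : (forall n, 0 <=: f n) ->
  exists2 e, 0 <=: e & forall n, exists2 t : R, 0 < t & t *: f n <=: e.
Proof.
move=> f0; have [d [_ [d_eq0 [d_sym [d_tri [d_nbhs d_complete]]]]]] := cm.
have /choice [T T_spec] : forall xn : E * nat,
    exists t : R, 0 < t /\ d xn.1 (xn.1 + t *: f xn.2) < 2^-1 ^+ xn.2.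
  move=> [x n] /=; have ball_x : nbhs x [set z | d x z < 2^-1 ^+ n].
    by apply/d_nbhs; exists (2^-1 ^+ n) => //; rewrite exprn_gt0 ?invr_gt0.
  by have [t t_gt0 ?] := nbhs_add_scaler (f n) ball_x; exists t.
pose S := fix S n := if n is k.+1 then S k + T (S k, k) *: f k else 0.
pose t n := T (S n, n).
have t_gt0 n : 0 < t n by have [] := T_spec (S n, n).
have S_step k : S k.+1 = S k + t k *: f k by [].
have S0 k : 0 <=: S k.
  elim: k => [|k IHk]; first exact: lev_refl.
  by rewrite S_step; apply: addv_ge0 IHk (scalev_ge0 (ltW (t_gt0 k)) (f0 k)).
have S_mono k j : S k <=: S (k + j)%N.
  elim: j => [|j IHj]; first by rewrite addn0; apply: lev_refl.
  rewrite addnS S_step; apply: lev_trans IHj (lev_wpDr _ _).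
  exact: scalev_ge0 (ltW (t_gt0 _)) (f0 _).
have [e Se] : exists e : E, S @ \oo --> e.
  have d_refl x : d x x = 0 by apply/d_eq0.
  apply: d_complete => eps; apply: (geometric_cauchy d_refl d_sym d_tri) => k.
  by have [] := T_spec (S k, k).
exists e; first by apply: (lev_lim Se); apply: nearW.
move=> n; exists (t n) => //; apply: (lev_lim Se); exists n.+1 => // m /= nm.
rewrite -(subnKC nm); apply: lev_trans (S_mono _ _).
by rewrite S_step addrC; apply: lev_wpDr.
Qed.

Lemma exists_weak_unit (ccc : forall D, disjoint_system L D -> countable D) :
  exists e, weak_unit L e.
Proof.
have [D [Dsys _ Dmax]] := exists_maximal_disjoint L setT; have [Dpos _] := Dsys.
have [g Dg] := countable_enum 0 (ccc _ Dsys).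
have [e e0 dom] := exists_dominating_series (fun n => vpos_ge0 L (g n)).
exists e; split=> // x xe0; apply: vabs_eq0; apply: Dmax => //; first exact: vabs_ge0.
move=> d Dd; have [n _ gnd] := Dg d Dd; have [t t_gt0 tle] := dom n.
rewrite -(vpos_id (Dpos _ Dd)) -gnd -(scalerK (lt0r_neq0 t_gt0) (vpos (g n))).
have tg0 : 0 <=: t *: vpos (g n) by apply: scalev_ge0 (ltW t_gt0) (vpos_ge0 _ _).
apply: vmeet_eq0_scale; rewrite ?invr_gt0 //; first exact: vabs_ge0.
exact: vmeet_eq0_lev (vabs_ge0 _ _) tg0 tle xe0.
Qed.
End LocallySolid.

Unset Implicit Arguments.
Theorem theorem4p6 (R : realType) (E : topologicalLmodType R)
    (L : vector_lattice E) :
  archimedean_vl L -> locally_solid L -> completely_metrizable R E ->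
  ((forall D : set E, disjoint_system L D -> countable D) <->
   ((exists e : E, weak_unit L e) /\ countable_sup_property L)).
Proof.
move=> arch ls cm; split=> [ccc|[[e e_unit] csp] D Dsys].
  split; first exact: exists_weak_unit ls cm ccc.
  exact: countable_sup_of_countable_disjoint arch ccc.
exact: (countable_disjoint_of_weak_unit (L := L) arch e_unit csp Dsys).
Qed.
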